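(* Let $u_{x,y}$ and $v_{x,y}$ be matrices of generalized kernels and put $\hat u_{x,y}=u_{x,y}+v_{x,y}$. Assume both $u$ and $\hat u$ are quasidefinite, and denote by $P^{[i]}_n,H_n,K_n$ the objects associated with $u$ and by $\hat P^{[i]}_n,\hat H_n$ those associated with $\hat u$. Then for every $n\ge0$ (with $K_{-1}:=0$) and every $z$, $$\hat P^{[1]}_n(z)=P^{[1]}_n(z)-\big\langle \hat P^{[1]}_n(x),(K_{n-1}(z,y))^\top\big\rangle_v,\qquad (\hat P^{[2]}_n(z))^\top=(P^{[2]}_n(z))^\top-\big\langle K_{n-1}(x,z),\hat P^{[2]}_n(y)\big\rangle_v,$$ and $$\hat H_n=H_n+\langle \hat P^{[1]}_n(x),P^{[2]}_n(y)\rangle_v=H_n+\langle P^{[1]}_n(x),\hat P^{[2]}_n(y)\rangle_v .$$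
   Context: Fix an integer $p\ge1$; ${}^\top$ denotes transpose. A matrix of generalized kernels $w_{x,y}$ is a $p\times p$ matrix of continuous linear functionals on $\mathbb C[x,y]$, defining the sesquilinear form $\langle P(x),Q(y)\rangle_w\in\mathbb C^{p\times p}$ for $P,Q\in\mathbb C^{p\times p}[x]$ with entries $(\langle P,Q\rangle_w)_{i,j}=\sum_{k,l=1}^p\langle (w_{x,y})_{k,l},P_{i,k}(x)Q_{j,l}(y)\rangle$; it is left-linear in the first argument and satisfies $\langle P,AQ\rangle_w=\langle P,Q\rangle_wA^\top$; forms add: $\langle\cdot,\cdot\rangle_{u+v}=\langle\cdot,\cdot\rangle_u+\langle\cdot,\cdot\rangle_v$. When an argument depends polynomially on an extra parameter $z$, the form is applied with $z$ fixed. Gram matrix $G_{k,l}=\langle I_px^k,I_py^l\rangle_w$; $w$ is quasidefinite if all leading block truncations $(G_{i,j})_{0\le i,j\le k-1}$ are nonsingular. Then $G=S_1^{-1}HS_2^{-\top}$ uniquely with $S_1,S_2$ block lower unitriangular and $H=\operatorname{diag}(H_0,H_1,\dots)$; the monic matrix polynomials $P^{[i]}_n(x)=\sum_{k=0}^n(S_i)_{n,k}x^k$ satisfy $\langle P^{[1]}_n(x),P^{[2]}_m(y)\rangle_w=\delta_{n,m}H_n$. The Christoffel--Darboux kernel is $K_n(x,y)=\sum_{k=0}^n(P^{[2]}_k(y))^\top H_k^{-1}P^{[1]}_k(x)$. *)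

From HB Require Import structures.
From mathcomp Require Import all_boot all_order all_algebra.
From mathcomp Require Import reals complex.
Set Implicit Arguments. Unset Strict Implicit. Unset Printing Implicit Defensive.
Import Order.TTheory GRing.Theory Num.Theory.
Local Open Scope ring_scope.

Section Defs.
Variables (R : realType) (p : nat).
Local Notation C := (R[i]).

(* A p x p matrix of generalized kernels w_{x,y} (each entry a linear
   functional on C[x,y]) is represented by its moments:
     kernel_moments w a b i j = < (w_{x,y})_{i,j} , x^a y^b >.
   A linear functional on C[x,y] is the same as its (arbitrary) moment
   sequence, since the monomials form a basis. *)
Definition gkernel := nat -> nat -> 'M[C]_p.

Definition gkernel_add (u v : gkernel) : gkernel := fun a b => u a b + v a b.

Definition mpoly := 'M[{poly C}]_p.

Definition sform (w : gkernel) (P Q : mpoly) : 'M[C]_p :=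
  \matrix_(i, j) \sum_(k < p) \sum_(l < p)
     \sum_(a < size (P i k)) \sum_(b < size (Q j l))
        (P i k)`_a * (Q j l)`_b * w a b k l.

(* block Gram matrix truncation (G_{i,j})_{0 <= i,j <= k-1}, of size k*p,
   where G_{a,b} = < I_p x^a, I_p y^b >_w, so (G_{a,b})_{i,j} = w a b i j *)
Definition gram_trunc (w : gkernel) (k : nat) :
    'M[C]_(\sum_(a < k) p, \sum_(b < k) p) :=
  \mxblock_(a < k, b < k) w a b.

Definition quasidefinite (w : gkernel) : Prop :=
  forall k : nat, \det (gram_trunc w k) != 0.

Definition monic_mpoly (n : nat) (P : mpoly) : Prop :=
  forall i j : 'I_p, leq (size (P i j - (i == j)%:R *: 'X^n)) n.

(* P1, P2, H are the monic biorthogonal matrix polynomials and the H_n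
   associated with w (i.e. P^{[i]}_n(x) = sum_k (S_i)_{n,k} x^k with
   G = S_1^{-1} H S_2^{-T}); they are characterized (uniquely, when w is
   quasidefinite) by monicity and <P^{[1]}_n, P^{[2]}_m>_w = delta_{n,m} H_n. *)
Definition is_MOP (w : gkernel) (P1 P2 : nat -> mpoly) (H : nat -> 'M[C]_p)
  : Prop :=
  (forall n, monic_mpoly n (P1 n) /\ monic_mpoly n (P2 n)) /\
  (forall n m, sform w (P1 n) (P2 m) = if n == m then H n else 0).

Definition mx_eval (z : C) (P : mpoly) : 'M[C]_p := map_mx (horner^~ z) P.
Definition mx_const (A : 'M[C]_p) : mpoly := map_mx polyC A.

Definition CD_zy (P1 P2 : nat -> mpoly) (H : nat -> 'M[C]_p) (n : nat) (z : C)
  : mpoly :=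
  \sum_(k < n.+1) ((P2 k)^T *m mx_const (invmx (H k) *m mx_eval z (P1 k))).

Definition CD_xz (P1 P2 : nat -> mpoly) (H : nat -> 'M[C]_p) (n : nat) (z : C)
  : mpoly :=
  \sum_(k < n.+1) (mx_const ((mx_eval z (P2 k))^T *m invmx (H k)) *m P1 k).

End Defs.

From HB Require Import structures.
From mathcomp Require Import all_boot all_order all_algebra.
From mathcomp Require Import reals complex.
Import Order.TTheory GRing.Theory Num.Theory.
Local Open Scope ring_scope.

(* Write [uh = u + v].  The monic polynomials [P1 k] (deg P1 k = k) form a
   basis, and the Fourier coefficient of a polynomial [T] of degree < n on
   [P1 k] is [<T, P2 k>_u H_k^-1].  Apply this to [T = Ph1 n - P1 n]: since
   [Ph1 n] is uh-orthogonal to every polynomial of degree < n and [P1 n] is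
   u-orthogonal to it, [<T, P2 k>_u = - <Ph1 n, P2 k>_v], and evaluating the
   expansion at [z] produces the Christoffel--Darboux kernel.  Likewise
   [Hh n = <Ph1 n, Ph2 n>_uh = <Ph1 n, P2 n>_uh = H n + <Ph1 n, P2 n>_v].
   The identities for the second family follow by applying these to the
   transposed kernels [(w_{b,a})^T], which exchange the roles of the two
   families. *)

Set Implicit Arguments.
Unset Strict Implicit.

Lemma big_ord_widen0 (V : nmodType) m n (F : nat -> V) : (m <= n)%N ->
  (forall a, (m <= a)%N -> F a = 0) -> \sum_(a < m) F a = \sum_(a < n) F a.
Proof.
move=> le_mn F0; rewrite (big_ord_widen n F le_mn) big_mkcond /=.
by apply: eq_bigr => a _; case: ltnP => // /F0.
Qed.

Section MatrixPolynomials.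
Variables (R : realType) (p : nat).
Local Notation M := 'M[R[i]]_p.
Local Notation mp := (mpoly R p).
Implicit Types (P Q T D : mp) (A : M) (w u v : gkernel R p).

Definition mcoef (P : mp) (a : nat) : M := map_mx (coefp a) P.

Definition deg_lt (P : mp) (n : nat) := [forall i, forall j, size (P i j) <= n]%N.

Lemma mcoef0 a : mcoef 0 a = 0.
Proof. exact: raddf0. Qed.

Lemma mcoefD P Q a : mcoef (P + Q) a = mcoef P a + mcoef Q a.
Proof. exact: raddfD. Qed.

Lemma mcoefB P Q a : mcoef (P - Q) a = mcoef P a - mcoef Q a.
Proof. exact: raddfB. Qed.

Lemma mcoef_const_mul A P a : mcoef (mx_const A *m P) a = A *m mcoef P a.
Proof.
apply/matrixP=> i j; rewrite !mxE /= coef_sum.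
by apply: eq_bigr => k _; rewrite !mxE coefCM.
Qed.

Lemma mcoef_scalarX b a : mcoef 'X^b%:M a = if a == b then 1%:M else 0.
Proof.
apply/matrixP=> i j; rewrite !mxE /= coefMn coefXn.
by case: (a == b); rewrite !mxE ?mul0rn.
Qed.

Lemma mcoef_monic n P a : monic_mpoly n P -> (n <= a)%N ->
  mcoef P a = if a == n then 1%:M else 0.
Proof.
move=> monP le_na; apply/matrixP=> i j; rewrite mxE /=.
move/leq_sizeP/(_ a le_na)/eqP: (monP i j).
rewrite coefB coefZ coefXn subr_eq0 => /eqP ->.
by case: (a == n); rewrite !mxE ?mulr1 ?mulr0.
Qed.

Lemma mpoly_eq0 P : (forall a, mcoef P a = 0) -> P = 0.
Proof.
move=> P0; apply/matrixP=> i j; apply/polyP=> a /=.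
by have := congr1 (fun A : M => A i j) (P0 a); rewrite !mxE coef0 /= => ->.
Qed.

Lemma deg_ltP P n : reflect (forall a, (n <= a)%N -> mcoef P a = 0) (deg_lt P n).
Proof.
apply: (iffP forallP) => [Pn a le_na | P0 i]; last apply/forallP => j.
  apply/matrixP=> i j; rewrite !mxE /= nth_default //.
  exact: leq_trans (forallP (Pn i) j) le_na.
apply/leq_sizeP => a le_na.
by have := congr1 (fun A : M => A i j) (P0 a le_na); rewrite !mxE.
Qed.

Lemma mcoef_deg_lt P n a : deg_lt P n -> (n <= a)%N -> mcoef P a = 0.
Proof. by move/deg_ltP; apply. Qed.

Lemma deg_lt_leq m n P : (m <= n)%N -> deg_lt P m -> deg_lt P n.
Proof.
move=> le_mn /forallP Pm; apply/forallP => i; apply/forallP => j.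
exact: leq_trans (forallP (Pm i) j) le_mn.
Qed.

Lemma deg_lt_const_mul A P n : deg_lt P n -> deg_lt (mx_const A *m P) n.
Proof.
move=> Pn; apply/deg_ltP => a le_na.
by rewrite mcoef_const_mul (mcoef_deg_lt Pn) ?mulmx0.
Qed.

Lemma deg_lt_scalarX b : deg_lt 'X^b%:M b.+1.
Proof. by apply/deg_ltP => a lt_ba; rewrite mcoef_scalarX gtn_eqF. Qed.

Lemma deg_lt_monic n P : monic_mpoly n P -> deg_lt P n.+1.
Proof.
move=> monP; apply/deg_ltP => a lt_na.
by rewrite (mcoef_monic monP (ltnW lt_na)) gtn_eqF.
Qed.

Lemma deg_lt_monicB n P Q : monic_mpoly n P -> monic_mpoly n Q -> deg_lt (P - Q) n.
Proof.
move=> monP monQ; apply/deg_ltP => a le_na.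
by rewrite mcoefB (mcoef_monic monP) ?(mcoef_monic monQ) ?subrr.
Qed.

Lemma monic_span (Q : nat -> mp) n T :
  (forall m, monic_mpoly m (Q m)) -> deg_lt T n ->
  exists A : nat -> M, T = \sum_(m < n) mx_const (A m) *m Q m.
Proof.
move=> monQ; elim: n T => [|n IHn] T Tn.
  exists (fun=> 0); rewrite big_ord0.
  by apply: mpoly_eq0 => a; apply: mcoef_deg_lt Tn _.
have [|A eA] := IHn (T - mx_const (mcoef T n) *m Q n).
  apply/deg_ltP => a le_na.
  rewrite mcoefB mcoef_const_mul (mcoef_monic (monQ n) le_na).
  have [->|ne_an] := eqVneq a n; first by rewrite mulmx1 subrr.
  by rewrite (mcoef_deg_lt Tn) ?mulmx0 ?subr0 // ltn_neqAle eq_sym ne_an.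
exists (fun m => if m == n then mcoef T n else A m).
rewrite big_ord_recr /= eqxx; apply/eqP; rewrite -subr_eq eA; apply/eqP.
by apply: eq_bigr => m _; rewrite /= ltn_eqF.
Qed.

Lemma mx_evalD z P Q : mx_eval z (P + Q) = mx_eval z P + mx_eval z Q.
Proof. exact: (raddfD (map_mx (horner_eval z))). Qed.

Lemma mx_eval_sum z n (F : 'I_n -> mp) :
  mx_eval z (\sum_k F k) = \sum_k mx_eval z (F k).
Proof. exact: (raddf_sum (map_mx (horner_eval z))). Qed.

Lemma mx_eval_const_mul z A P : mx_eval z (mx_const A *m P) = A *m mx_eval z P.
Proof.
rewrite /mx_eval (map_mxM (horner_eval z)) /mx_const -map_mx_comp.
by congr (_ *m _); apply/matrixP=> i j; rewrite !mxE /= horner_evalE hornerC.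
Qed.

Lemma sformE w P Q N : deg_lt P N -> deg_lt Q N ->
  sform w P Q = \sum_(a < N) \sum_(b < N) mcoef P a *m w a b *m (mcoef Q b)^T.
Proof.
move=> PN QN; apply/matrixP=> i j; rewrite !mxE summxE.
have size_le (S : mp) k l : deg_lt S N -> (size (S k l) <= N)%N.
  by move/forallP/(_ k)/forallP; apply.
transitivity (\sum_(k < p) \sum_(l < p) \sum_(a < N) \sum_(b < N)
    (P i k)`_a * (Q j l)`_b * w a b k l).
  apply: eq_bigr => k _; apply: eq_bigr => l _.
  pose f a b := (P i k)`_a * (Q j l)`_b * w a b k l.
  rewrite (big_ord_widen0 (F := fun a => \sum_(b < size (Q j l)) f a b)
             (size_le P i k PN)) => [|a le_a]; last first.
    by apply: big1 => b _; rewrite /f nth_default // !mul0r.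
  apply: eq_bigr => a _.
  rewrite (big_ord_widen0 (F := f a) (size_le Q j l QN)) //.
  by move=> b le_b; rewrite /f [(Q j l)`_b]nth_default // mulr0 mul0r.
under [RHS]eq_bigr do rewrite summxE.
under [RHS]eq_bigr => a _ do under eq_bigr => b _ do
  (rewrite !mxE; under eq_bigr => l _ do rewrite !mxE mulr_suml).
under [LHS]eq_bigr => k _ do rewrite exchange_big.
rewrite [LHS]exchange_big.
under [LHS]eq_bigr => a _ do under eq_bigr => k _ do rewrite exchange_big.
under [LHS]eq_bigr => a _ do rewrite exchange_big.
under [LHS]eq_bigr => a _ do under eq_bigr => b _ do rewrite exchange_big.
apply: eq_bigr => a _; apply: eq_bigr => b _; apply: eq_bigr => l _.
by apply: eq_bigr => k _; rewrite !mxE mulrAC.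
Qed.

Lemma deg_lt_bound P Q T : exists N, [/\ deg_lt P N, deg_lt Q N & deg_lt T N].
Proof.
pose d (S : mp) := \max_(kl : 'I_p * 'I_p) size (S kl.1 kl.2).
have dS (S : mp) : deg_lt S (d S).
  by apply/forallP => k; apply/forallP => l; apply: (leq_bigmax (k, l)).
exists (d P + d Q + d T)%N; split; apply: deg_lt_leq (dS _).
- by rewrite -addnA leq_addr.
- by rewrite addnAC leq_addl.
- exact: leq_addl.
Qed.

Lemma sform_add u v P Q :
  sform (gkernel_add u v) P Q = sform u P Q + sform v P Q.
Proof.
have [N [PN QN _]] := deg_lt_bound P Q 0.
rewrite !(sformE _ PN QN) -big_split; apply: eq_bigr => a _.
by rewrite -big_split; apply: eq_bigr => b _; rewrite mulmxDr mulmxDl.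
Qed.

Definition gkernel_tr (w : gkernel R p) : gkernel R p := fun a b => (w b a)^T.

Lemma sform_tr w P Q : sform (gkernel_tr w) P Q = (sform w Q P)^T.
Proof.
have [N [PN QN _]] := deg_lt_bound P Q 0.
rewrite (sformE _ PN QN) (sformE _ QN PN) exchange_big linear_sum /=.
apply: eq_bigr => a _; rewrite linear_sum; apply: eq_bigr => b _ /=.
by rewrite !trmx_mul trmxK mulmxA.
Qed.

Lemma sform0l w Q : sform w 0 Q = 0.
Proof.
apply/matrixP=> i j; rewrite !mxE; apply: big1 => k _; apply: big1 => l _.
by rewrite mxE size_poly0 big_ord0.
Qed.

Lemma sformDl w P (P' : mp) Q :
  sform w (P + P') Q = sform w P Q + sform w P' Q.
Proof.
have [N [PN P'N QN]] := deg_lt_bound P P' Q.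
have PP'N : deg_lt (P + P') N.
  by apply/deg_ltP => a le_a; rewrite mcoefD !(mcoef_deg_lt _ le_a) ?addr0.
rewrite !(sformE _ _ QN) // -big_split; apply: eq_bigr => a _.
by rewrite -big_split; apply: eq_bigr => b _; rewrite mcoefD !mulmxDl.
Qed.

Lemma sformBl w P (P' : mp) Q :
  sform w (P - P') Q = sform w P Q - sform w P' Q.
Proof. by rewrite -[in RHS](subrK P' P) (sformDl _ (P - P')) addrK. Qed.

Lemma sform_suml w n (F : 'I_n -> mp) Q :
  sform w (\sum_k F k) Q = \sum_k sform w (F k) Q.
Proof. by elim/big_rec2: _ => [|k S T _ <-]; rewrite ?sform0l ?sformDl. Qed.

Lemma sformZl w A P Q : sform w (mx_const A *m P) Q = A *m sform w P Q.
Proof.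
have [N [PN QN _]] := deg_lt_bound P Q 0.
rewrite (sformE _ (deg_lt_const_mul A PN) QN) (sformE _ PN QN) mulmx_sumr.
apply: eq_bigr => a _; rewrite mulmx_sumr; apply: eq_bigr => b _.
by rewrite mcoef_const_mul !mulmxA.
Qed.

Lemma sform0r w P : sform w P 0 = 0.
Proof. by rewrite -[LHS]trmxK -sform_tr sform0l trmx0. Qed.

Lemma sformBr w P Q (Q' : mp) :
  sform w P (Q - Q') = sform w P Q - sform w P Q'.
Proof. by rewrite -[LHS]trmxK -sform_tr sformBl linearB /= !sform_tr !trmxK. Qed.

Lemma sform_sumr w n (F : 'I_n -> mp) P :
  sform w P (\sum_k F k) = \sum_k sform w P (F k).
Proof.
rewrite -[LHS]trmxK -sform_tr sform_suml linear_sum.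
by apply: eq_bigr => k _; rewrite /= sform_tr trmxK.
Qed.

Lemma sformZr w A P Q : sform w P (mx_const A *m Q) = sform w P Q *m A^T.
Proof. by rewrite -[LHS]trmxK -sform_tr sformZl trmx_mul sform_tr trmxK. Qed.

Lemma sform_monic_span_r (Q : nat -> mp) w P n T :
  (forall m, monic_mpoly m (Q m)) ->
  (forall m, (m < n)%N -> sform w P (Q m) = 0) -> deg_lt T n -> sform w P T = 0.
Proof.
move=> monQ PQ0 Tn; have [A ->] := monic_span monQ Tn.
by rewrite sform_sumr big1 // => m _; rewrite sformZr PQ0 ?mul0mx.
Qed.

Lemma sform_scalarXr w D n b : deg_lt D n -> (b < n)%N ->
  sform w D 'X^b%:M = \sum_(a < n) mcoef D a *m w a b.
Proof.
move=> Dn lt_bn; rewrite (sformE w Dn (deg_lt_leq lt_bn (deg_lt_scalarX b))).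
rewrite exchange_big (bigD1 (Ordinal lt_bn)) //= [X in _ + X]big1 ?addr0.
  by apply: eq_bigr => a _; rewrite mcoef_scalarX eqxx trmx1 mulmx1.
move=> c ne_cb; apply: big1 => a _.
by rewrite mcoef_scalarX ifF ?trmx0 ?mulmx0 //; apply: negbTE.
Qed.

Lemma quasidefinite_nondegenerate w n D : quasidefinite w -> deg_lt D n ->
  (forall b, (b < n)%N -> sform w D 'X^b%:M = 0) -> D = 0.
Proof.
move=> qd_w Dn D0.
(* [X *m gram_trunc w n] is the block row of the pairings [<D, x^b I>_w]. *)
pose X := \mxrow_(a < n) mcoef D a.
have XG0 : X *m gram_trunc w n = 0.
  rewrite mul_mxrow_mxblock -mxrow0; apply: eq_mxrow => b.
  by rewrite -sform_scalarXr ?D0.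
have X0 : X = 0.
  have unitG : gram_trunc w n \in unitmx by rewrite unitmxE unitfE qd_w.
  by rewrite -(mulmxK unitG X) XG0 mul0mx.
apply: mpoly_eq0 => a; have [lt_an|] := ltnP a n; last exact: mcoef_deg_lt.
have := congr1 (fun Y => submxrow Y (Ordinal lt_an)) X0.
by rewrite mxrowK submxrow0.
Qed.

Lemma quasidefinite_tr w : quasidefinite w -> quasidefinite (gkernel_tr w).
Proof. by move=> qd_w k; rewrite /gram_trunc -tr_mxblock det_tr. Qed.

Lemma is_MOP_tr w (P1 P2 : nat -> mp) (H : nat -> M) :
  is_MOP w P1 P2 H -> is_MOP (gkernel_tr w) P2 P1 (fun n => (H n)^T).
Proof.
move=> [monP orthP]; split=> [n | n m]; first by have [? ?] := monP n.
by rewrite sform_tr orthP; case: eqVneq => [->|_]; rewrite ?trmx0.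
Qed.

Section MonicOrthogonalPolynomials.
Variables (w : gkernel R p) (P1 P2 : nat -> mp) (H : nat -> M).
Hypothesis mop : is_MOP w P1 P2 H.

Let monic1 n : monic_mpoly n (P1 n) := (mop.1 n).1.
Let monic2 n : monic_mpoly n (P2 n) := (mop.1 n).2.
Let orth n m : sform w (P1 n) (P2 m) = if n == m then H n else 0 := mop.2 n m.

Lemma mop_orth_r n T : deg_lt T n -> sform w (P1 n) T = 0.
Proof.
move=> Tn; apply: (sform_monic_span_r monic2 _ Tn) => m lt_mn.
by rewrite orth gtn_eqF.
Qed.

Lemma mop_orth_l n T : deg_lt T n -> sform w T (P2 n) = 0.
Proof.
move=> Tn; rewrite -[LHS]trmxK -sform_tr.
rewrite (sform_monic_span_r monic1 _ Tn) ?trmx0 //.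
by move=> m lt_mn; rewrite sform_tr orth ltn_eqF ?trmx0.
Qed.

Hypothesis qd_w : quasidefinite w.

Lemma mop_H_unit k : H k \in unitmx.
Proof.
rewrite -row_free_unit -kermx_eq0; set K := kermx (H k).
(* As [K *m H k = 0], [K *m P1 k] is orthogonal to every [P2 m] with [m <= k]. *)
have KP0 : mx_const K *m P1 k = 0.
  have KPk := deg_lt_const_mul K (deg_lt_monic (monic1 k)).
  apply: (quasidefinite_nondegenerate qd_w KPk) => b lt_bk.
  have Xb := deg_lt_leq lt_bk (deg_lt_scalarX b).
  apply: (sform_monic_span_r monic2 _ Xb).
  by move=> m _; rewrite sformZl orth; case: (k == m); rewrite ?mulmx_ker ?mulmx0.
move/(congr1 (mcoef ^~ k)): KP0.
by rewrite mcoef_const_mul (mcoef_monic (monic1 k)) // eqxx mulmx1 mcoef0 => ->.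
Qed.

Lemma mop_fourier n T : deg_lt T n ->
  T = \sum_(k < n) mx_const (sform w T (P2 k) *m invmx (H k)) *m P1 k.
Proof.
move=> Tn; have [A eA] := monic_span monic1 Tn.
rewrite {1}eA; apply: eq_bigr => k _; congr (mx_const _ *m _).
rewrite eA sform_suml (bigD1 k) //= sformZl orth eqxx big1 ?addr0.
  by rewrite mulmxK ?mop_H_unit.
by move=> m ne_mk; rewrite sformZl orth ifF ?mulmx0 //; apply: negbTE.
Qed.

End MonicOrthogonalPolynomials.

Section AdditivePerturbation.
Variables (u v uh : gkernel R p).
Hypothesis sform_split : forall P Q, sform uh P Q = sform u P Q + sform v P Q.
Variables (P1 P2 Ph1 Ph2 : nat -> mp) (H Hh : nat -> M).
Hypotheses (qd_u : quasidefinite u)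
  (mop_u : is_MOP u P1 P2 H) (mop_uh : is_MOP uh Ph1 Ph2 Hh).

Lemma perturbed_coef n k : (k < n)%N ->
  sform u (Ph1 n - P1 n) (P2 k) = - sform v (Ph1 n) (P2 k).
Proof.
move=> lt_kn; have P2k := deg_lt_leq lt_kn (deg_lt_monic (mop_u.1 k).2).
rewrite sformBl (mop_orth_r mop_u P2k) subr0.
by apply/eqP; rewrite -addr_eq0 -sform_split (mop_orth_r mop_uh P2k).
Qed.

Lemma perturbed_mop_eval n z : mx_eval z (Ph1 n) = mx_eval z (P1 n) -
  \sum_(k < n) sform v (Ph1 n) (P2 k) *m invmx (H k) *m mx_eval z (P1 k).
Proof.
have Tn := deg_lt_monicB (mop_uh.1 n).1 (mop_u.1 n).1.
rewrite -[in LHS](subrK (P1 n) (Ph1 n)) (mop_fourier mop_u qd_u Tn) addrC.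
rewrite mx_evalD mx_eval_sum -sumrN; congr (_ + _); apply: eq_bigr => k _.
by rewrite perturbed_coef // mx_eval_const_mul !mulNmx.
Qed.

Lemma perturbed_mop_norm n : Hh n = H n + sform v (Ph1 n) (P2 n).
Proof.
have [[monPh1 monPh2] [monP1 monP2]] := (mop_uh.1 n, mop_u.1 n).
have eh : sform uh (Ph1 n) (Ph2 n) = sform uh (Ph1 n) (P2 n).
  apply/eqP; rewrite -subr_eq0 -sformBr.
  by rewrite (mop_orth_r mop_uh (deg_lt_monicB monPh2 monP2)).
have e : sform u (Ph1 n) (P2 n) = sform u (P1 n) (P2 n).
  apply/eqP; rewrite -subr_eq0 -sformBl.
  by rewrite (mop_orth_l mop_u (deg_lt_monicB monPh1 monP1)).
have := mop_uh.2 n n; rewrite eqxx => <-.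
by rewrite eh sform_split e (mop_u.2 n n) eqxx.
Qed.

End AdditivePerturbation.

Lemma sform_CD_zy w (P1 P2 : nat -> mp) (H : nat -> M) Q n z :
  sform w Q (if n is n'.+1 then CD_zy P1 P2 H n' z else 0)^T =
  \sum_(k < n) sform w Q (P2 k) *m invmx (H k) *m mx_eval z (P1 k).
Proof.
case: n => [|n]; first by rewrite big_ord0 trmx0 sform0r.
rewrite /CD_zy linear_sum sform_sumr; apply: eq_bigr => k _ /=.
by rewrite trmx_mul /mx_const map_trmx trmxK sformZr trmxK mulmxA.
Qed.

Lemma sform_CD_xz w (P1 P2 : nat -> mp) (H : nat -> M) Q n z :
  sform w (if n is n'.+1 then CD_xz P1 P2 H n' z else 0) Q =
  \sum_(k < n) (mx_eval z (P2 k))^T *m invmx (H k) *m sform w (P1 k) Q.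
Proof.
case: n => [|n]; first by rewrite big_ord0 sform0l.
by rewrite /CD_xz sform_suml; apply: eq_bigr => k _; rewrite sformZl.
Qed.

End MatrixPolynomials.

Unset Implicit Arguments.

Theorem mainTheorem3 (R : realType) (p : nat) (hp : (1 <= p)%N)
  (u v : gkernel R p)
  (P1 P2 : nat -> mpoly R p) (H : nat -> 'M[R[i]]_p)
  (Ph1 Ph2 : nat -> mpoly R p) (Hh : nat -> 'M[R[i]]_p) :
  quasidefinite u ->
  quasidefinite (gkernel_add u v) ->
  is_MOP u P1 P2 H ->
  is_MOP (gkernel_add u v) Ph1 Ph2 Hh ->
  forall (n : nat) (z : R[i]),
    (* K_{n-1}(z,y) and K_{n-1}(x,z), with K_{-1} := 0 *)
    let Kzy := if n is n'.+1 then CD_zy P1 P2 H n' z else 0 in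
    let Kxz := if n is n'.+1 then CD_xz P1 P2 H n' z else 0 in
    [/\ mx_eval z (Ph1 n) = mx_eval z (P1 n) - sform v (Ph1 n) Kzy^T,
        (mx_eval z (Ph2 n))^T = (mx_eval z (P2 n))^T - sform v Kxz (Ph2 n),
        Hh n = H n + sform v (Ph1 n) (P2 n)
      & Hh n = H n + sform v (P1 n) (Ph2 n)].
Proof.
move=> qd_u _ mop_u mop_uh n z Kzy Kxz.
have split_uh := sform_add u v.
have split_uhT P Q : sform (gkernel_tr (gkernel_add u v)) P Q =
    sform (gkernel_tr u) P Q + sform (gkernel_tr v) P Q.
  by rewrite !sform_tr sform_add linearD.
have qd_uT := quasidefinite_tr qd_u.
have [mop_uT mop_uhT] := (is_MOP_tr mop_u, is_MOP_tr mop_uh).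
split.
- by rewrite /Kzy sform_CD_zy (perturbed_mop_eval split_uh qd_u mop_u mop_uh).
- rewrite /Kxz sform_CD_xz (perturbed_mop_eval split_uhT qd_uT mop_uT mop_uhT).
  rewrite linearB linear_sum /=; congr (_ - _); apply: eq_bigr => k _.
  by rewrite !trmx_mul sform_tr trmxK trmx_inv trmxK mulmxA.
- exact: (perturbed_mop_norm split_uh mop_u mop_uh).
- apply: trmx_inj; rewrite (perturbed_mop_norm split_uhT mop_uT mop_uhT).
  by rewrite linearD sform_tr.
Qed.
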